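(* Let $C\subseteq 2^X$ be an ample class and let $C'\subseteq C$ be a subclass whose graph $G(C')$ is connected. Then $C'$ is convex in $C$ if and only if $C'$ is locally convex in $C$.
   Context: A cube of $2^X$ is $\{T\cup Z:Z\subseteq Y\}$ with $Y\subseteq X$, $T\subseteq X\setminus Y$ ($Y$ its support). $Y$ is shattered by $C$ if $\{c\cap Y:c\in C\}=2^Y$; $C$ is ample if every set shattered by $C$ is the support of a cube contained in $C$. $G(C)$ is the graph on $C$ joining $c,c'$ with $|c\Delta c'|=1$. For $c,c'\subseteq X$, $B(c,c')$ is the smallest cube of $2^X$ containing $c$ and $c'$ (the set of $t$ with $c\cap c'\subseteq t\subseteq c\cup c'$). For $C'\subseteq C$: $C'$ is convex in $C$ if $B(c,c')\cap C\subseteq C'$ for all $c,c'\in C'$; $C'$ is locally convex in $C$ if $B(c,c')\cap C\subseteq C'$ for all $c,c'\in C'$ with $|c\Delta c'|=2$. *)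

From mathcomp Require Import all_boot.
Set Implicit Arguments. Unset Strict Implicit. Unset Printing Implicit Defensive.

Section Ample.
Variable X : finType.

Definition symd (a b : {set X}) : {set X} := (a :\: b) :|: (b :\: a).

Definition cube (T Y : {set X}) : {set {set X}} := [set T :|: Z | Z in powerset Y].

Definition has_cube_with_support (C : {set {set X}}) (Y : {set X}) : Prop :=
  exists T : {set X}, T \subset ~: Y /\ cube T Y \subset C.

Definition shattered (C : {set {set X}}) (Y : {set X}) : Prop :=
  [set c :&: Y | c in C] = powerset Y.

Definition ample (C : {set {set X}}) : Prop :=
  forall Y : {set X}, shattered C Y -> has_cube_with_support C Y.

(* B(c,c') : smallest cube containing c and c' *)
Definition Bcube (c c' : {set X}) : {set {set X}} :=
  [set t : {set X} | (c :&: c' \subset t) && (t \subset c :|: c')].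

Definition convex_in (C' C : {set {set X}}) : Prop :=
  forall c c', c \in C' -> c' \in C' -> Bcube c c' :&: C \subset C'.

Definition locally_convex_in (C' C : {set {set X}}) : Prop :=
  forall c c', c \in C' -> c' \in C' -> #|symd c c'| = 2 ->
    Bcube c c' :&: C \subset C'.

Definition adjG (a b : {set X}) : bool := #|symd a b| == 1.

Definition graph_connected (C' : {set {set X}}) : Prop :=
  forall c c', c \in C' -> c' \in C' ->
    exists p : seq {set X},
      [/\ path adjG c p, all (fun v => v \in C') p & last c p = c'].

End Ample.

From mathcomp Require Import all_boot.
Set Implicit Arguments. Unset Strict Implicit. Unset Printing Implicit Defensive.

(* Only "locally convex -> convex" needs work.  It is proved by induction on #|C|,
   for all connected components of C' at once.  Ampleness is inherited by the
   fibers {c | (e \in c) = v}, by the carriers {c | (e \in c) = v, toggle c e \in C}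
   and by the intervals B(a,b) :&: C, and in an ample class any a, b are joined
   by a path inside B(a,b) :&: C.  To get t \in C' for t in B(c,c') :&: C, walk
   from c to t along such a path.  A step from w to toggle w g has g in c (+) c',
   so the path from c to c' in C' has an edge flipping g; walking in C' from w
   towards it, the first edge (u, toggle u g) flipping g is reached inside the
   fiber of w, where induction gives B(w,u) :&: fiber <= C'.  Walking from u back to w inside the carrier of g,
   local convexity of the squares s, toggle s g, toggle s h, toggle (toggle s g) h
   keeps the g-neighbour of the current point in C', and ends with
   toggle w g \in C'. *)

Lemma connect_invariant (T : finType) (r : rel T) (P : T -> Prop) x y :
  P x -> (forall a b, P a -> r a b -> P b) -> connect r x y -> P y.
Proof.
move=> Px step /connectP[p]; elim: p x Px => [|z p IHp] x Px /=; first by move=> _ ->.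
by case/andP=> xz pz; apply: IHp pz; apply: step xz.
Qed.

Section Ample.
Variable X : finType.
Implicit Types (a b c q s t u w x y S T Y Z : {set X}) (C D : {set {set X}}).
Implicit Types (e g i : X).

Definition toggle a e : {set X} := symd a [set e].

Lemma in_symd a b i : (i \in symd a b) = (i \in a) (+) (i \in b).
Proof. by rewrite !inE; case: (i \in a); case: (i \in b). Qed.

Lemma in_toggle a e i : (i \in toggle a e) = (i \in a) (+) (i == e).
Proof. by rewrite in_symd inE. Qed.

Lemma symdC a b : symd a b = symd b a.
Proof. by apply/setP=> i; rewrite !in_symd addbC. Qed.

Lemma symdK a b : symd a (symd a b) = b.
Proof. by apply/setP=> i; rewrite !in_symd addKb. Qed.

Lemma symd_eq0 a b : (symd a b == set0) = (a == b).
Proof.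
apply/eqP/eqP=> [ab0|->]; last by apply/setP=> i; rewrite in_symd addbb inE.
by rewrite -(symdK a b) ab0; apply/setP=> i; rewrite in_symd inE addbF.
Qed.

Lemma toggleK e : involutive (toggle^~ e).
Proof. by move=> a; apply/setP=> i; rewrite !in_toggle -addbA addbb addbF. Qed.

Lemma toggleC a e g : toggle (toggle a e) g = toggle (toggle a g) e.
Proof. by apply/setP=> i; rewrite !in_toggle -!addbA [(_ == g) (+) _]addbC. Qed.

Lemma toggle_notin a e : e \notin a -> toggle a e = e |: a.
Proof.
move=> ea; apply/setP=> i; rewrite in_toggle !inE.
by case: (i =P e) => [->|_]; rewrite ?(negbTE ea) ?addbF.
Qed.

Lemma in_toggle_neq a e i : i != e -> (i \in toggle a e) = (i \in a).
Proof. by move=> ie; rewrite in_toggle (negbTE ie) addbF. Qed.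

Lemma symd_toggle a e : symd a (toggle a e) = [set e].
Proof. exact: symdK. Qed.

Lemma adjGP a b : reflect (exists e, b = toggle a e) (adjG a b).
Proof.
apply: (iffP cards1P) => [[e abe]|[e ->]]; last by exists e; rewrite symd_toggle.
by exists e; rewrite /toggle -abe symdK.
Qed.

Lemma adjG_sym : symmetric (@adjG X).
Proof. by move=> a b; rewrite /adjG symdC. Qed.

Lemma card_symd_toggle a b e :
  e \in symd a b -> #|symd (toggle a e) b| = #|symd a b|.-1.
Proof.
move=> eab; rewrite (cardsD1 e (symd a b)) eab add1n /=.
suff -> : symd (toggle a e) b = symd a b :\ e by [].
apply/setP=> i; rewrite in_setD1 in_symd in_toggle in_symd.
case: (i =P e) => [->|_]; rewrite ?addbF //=.
by move: eab; rewrite in_symd; case: (e \in a); case: (e \in b).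
Qed.

Lemma symd_toggle2 s e g : e != g -> symd (toggle s e) (toggle s g) = [set e; g].
Proof.
move=> eg; apply/setP=> i; rewrite in_symd !in_toggle !inE.
by case: (i \in s); case: (i =P e) => [->|_]; rewrite ?(negbTE eg) //; case: (i == g).
Qed.

Lemma BcubeP a b t :
  reflect (forall i, i \notin symd a b -> (i \in t) = (i \in a)) (t \in Bcube a b).
Proof.
rewrite inE; apply: (iffP andP) => [[/subsetP abt /subsetP tab] i|tab].
  rewrite in_symd negb_add => /eqP ab.
  case ai: (i \in a); first by apply: abt; rewrite inE ai -ab ai.
  by apply/negP => /tab; rewrite inE ai -ab ai.
split; apply/subsetP=> i; rewrite !inE.
  by case/andP=> ai bi; rewrite tab // in_symd ai bi.
case ai: (i \in a) => //=; case bi: (i \in b) => //.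
by rewrite tab ?ai // in_symd ai bi.
Qed.

Lemma Bcube_symd a b t : (t \in Bcube a b) = (symd a t \subset symd a b).
Proof.
apply/BcubeP/subsetP=> [tab i|tab i abi].
  by apply: contraLR => /tab; rewrite in_symd => ->; rewrite addbb.
by apply/eqP; rewrite eq_sym -negb_add -in_symd; apply: contra abi; apply: tab.
Qed.

Lemma BcubeC a b : Bcube a b = Bcube b a.
Proof. by rewrite /Bcube setIC setUC. Qed.

Lemma mem_Bcube_l a b : a \in Bcube a b.
Proof. by apply/BcubeP. Qed.

Lemma mem_Bcube_r a b : b \in Bcube a b.
Proof. by rewrite BcubeC mem_Bcube_l. Qed.

Lemma Bcube_subset a b s t :
  s \in Bcube a b -> t \in Bcube a b -> Bcube s t \subset Bcube a b.
Proof.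
move=> /BcubeP sab /BcubeP tab; apply/subsetP => x /BcubeP xst.
by apply/BcubeP => i iab; rewrite -sab // xst // in_symd sab // tab // addbb.
Qed.

Lemma toggle_Bcube a b e : e \in symd a b -> toggle a e \in Bcube a b.
Proof. by move=> eab; rewrite Bcube_symd symd_toggle sub1set. Qed.

Lemma Bcube_edge a b s g :
  s \in Bcube a b -> toggle s g \in Bcube a b -> g \in symd a b.
Proof.
move=> /BcubeP sab /BcubeP tsab; apply: contraT => /[dup] /sab sg /tsab.
by rewrite in_toggle eqxx sg; case: (g \in a).
Qed.

Definition fiber C e (v : bool) : {set {set X}} := [set c in C | (e \in c) == v].

Definition carrier C e (v : bool) : {set {set X}} :=
  [set c in fiber C e v | toggle c e \in C].

Lemma fiberS C D e v : C \subset D -> fiber C e v \subset fiber D e v.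
Proof. by move=> CD; rewrite /fiber !setIdE setSI. Qed.

Lemma in_fiber C e v c : (c \in fiber C e v) = (c \in C) && ((e \in c) == v).
Proof. by rewrite inE. Qed.

Lemma fiber_sub C e v : fiber C e v \subset C.
Proof. by rewrite /fiber setIdE subsetIl. Qed.

Lemma in_carrier C e v c :
  (c \in carrier C e v) = [&& c \in C, (e \in c) == v & toggle c e \in C].
Proof. by rewrite !inE andbA. Qed.

Lemma carrier_sub C e v : carrier C e v \subset fiber C e v.
Proof. by rewrite /carrier setIdE subsetIl. Qed.

Lemma shatteredP C Y :
  shattered C Y <-> forall S, S \subset Y -> exists2 c, c \in C & c :&: Y = S.
Proof.
split=> [shY S SY|shY].
  have /imsetP[c cC ->] : S \in [set c :&: Y | c in C] by rewrite shY powersetE.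
  by exists c.
apply/setP=> S; rewrite powersetE; apply/imsetP/idP => [[c _ ->]|/shY[c cC <-]].
  exact: subsetIr.
by exists c.
Qed.

Lemma shattered_sub C D Y : C \subset D -> shattered C Y -> shattered D Y.
Proof.
move=> /subsetP CD /shatteredP shY; apply/shatteredP=> S /shY[c /CD cD <-].
by exists c.
Qed.

Lemma shattered_fiber_notin C e v Y : shattered (fiber C e v) Y -> e \notin Y.
Proof.
move=> /shatteredP shY; apply/negP=> eY.
have [c1 c1F /setP/(_ e)] := shY Y (subxx Y).
have [c0 c0F /setP/(_ e)] := shY set0 (sub0set Y).
rewrite !inE eY !andbT => c0e c1e.
by move: c1F c0F; rewrite !in_fiber c0e c1e => /andP[_ /eqP <-] /andP[].
Qed.

Lemma shattered_set0 C c : c \in C -> shattered C set0.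
Proof.
move=> cC; apply/shatteredP => S; rewrite subset0 => /eqP ->.
by exists c; rewrite ?setI0.
Qed.

Lemma cube_subP C T Y :
  reflect (forall Z, Z \subset Y -> T :|: Z \in C) (cube T Y \subset C).
Proof.
apply: (iffP subsetP) => [cubeT Z ZY|cubeT t /imsetP[Z]].
  by apply: cubeT; apply/imsetP; exists Z; rewrite ?powersetE.
by rewrite powersetE => /cubeT TZ ->.
Qed.

Lemma has_cube_sub C D Y :
  C \subset D -> has_cube_with_support C Y -> has_cube_with_support D Y.
Proof. by move=> CD [T [TY cubeT]]; exists T; split; last exact: subset_trans CD. Qed.

Lemma in_setU_outside T Y Z i :
  Z \subset Y -> i \notin Y -> (i \in T :|: Z) = (i \in T).
Proof.
move=> /subsetP ZY /negPf iY; rewrite inE orbC.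
by case: (boolP (i \in Z)) => // /ZY; rewrite iY.
Qed.

Lemma setUI_disjoint T Y Z : T \subset ~: Y -> Z \subset Y -> (T :|: Z) :&: Y = Z.
Proof.
move=> /subsetP TY /subsetP ZY; apply/setP=> i; rewrite !inE.
case: (boolP (i \in Y)) => iY.
  by rewrite andbT; case: (boolP (i \in T)) => // /TY; rewrite inE iY.
by rewrite andbF; apply/esym/negP => /ZY; apply/negP.
Qed.

Lemma has_cube_shattered C Y : has_cube_with_support C Y -> shattered C Y.
Proof.
move=> [T [TY /cube_subP cubeT]]; apply/shatteredP => S SY.
by exists (T :|: S); [apply: cubeT | apply: setUI_disjoint].
Qed.

Lemma cube_fiber C T Y e :
  e \notin Y -> cube T Y \subset C -> cube T Y \subset fiber C e (e \in T).
Proof.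
move=> eY /cube_subP cubeT; apply/cube_subP => Z ZY.
by rewrite in_fiber cubeT // (in_setU_outside _ ZY eY) eqxx.
Qed.

Lemma shattered_setU1 C e Y :
  e \notin Y -> (forall v, shattered (fiber C e v) Y) -> shattered C (e |: Y).
Proof.
move=> eY shF; apply/shatteredP => S SeY.
have SY : S :\ e \subset Y by rewrite subDset.
have /shatteredP/(_ _ SY)[c] := shF (e \in S).
rewrite in_fiber => /andP[cC /eqP ce] /setP cY.
exists c => //; apply/setP => i; rewrite !inE.
have [->|ie] := eqVneq i e; first by rewrite ce andbT.
by move: (cY i); rewrite !inE ie.
Qed.

Lemma has_cube_carrier C e v Y : e \notin Y ->
  has_cube_with_support C (e |: Y) -> has_cube_with_support (carrier C e v) Y.
Proof.
move=> eY [T [TeY /cube_subP cubeT]].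
have eT : e \notin T by apply/negP => /(subsetP TeY); rewrite !inE eqxx.
have TY : T \subset ~: Y by apply: subset_trans TeY _; rewrite setCS subsetUr.
exists (if v then e |: T else T); split.
  by case: v => //; rewrite subUset sub1set inE eY.
apply/cube_subP => Z ZY; set w := T :|: Z.
have ew : e \notin w by rewrite (in_setU_outside _ ZY eY).
have wC : w \in C by apply: cubeT; apply: subset_trans ZY (subsetUr _ _).
have ewC : e |: w \in C by rewrite setUCA; apply: cubeT; apply: setUS.
case: v; rewrite in_carrier; last by rewrite wC (negPf ew) toggle_notin.
by rewrite -setUA -/w ewC -toggle_notin // toggleK wC in_toggle eqxx (negPf ew).
Qed.

Lemma ample_carrier C e v : ample C -> ample (carrier C e v).
Proof.
move=> ampC Y shY.
have eY := shattered_fiber_notin (shattered_sub (carrier_sub C e v) shY).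
apply: (has_cube_carrier _ eY); apply: ampC; apply: (shattered_setU1 eY) => w.
apply/shatteredP => S SY; have /shatteredP/(_ _ SY)[c] := shY.
rewrite in_carrier => /and3P[cC /eqP ce tcC] cY.
have [->|wv] := eqVneq w v; first by exists c; rewrite ?in_fiber ?cC ?ce ?eqxx.
exists (toggle c e).
  by rewrite in_fiber tcC in_toggle eqxx ce; case: w v wv {shY ce} => [] [].
rewrite -cY; apply/setP => i; rewrite !in_setI in_toggle.
by have [->|_] := eqVneq i e; rewrite ?(negPf eY) ?andbF ?addbF.
Qed.

Lemma ample_fiber C e v : ample C -> ample (fiber C e v).
Proof.
move=> ampC Y shY; have eY := shattered_fiber_notin shY.
have [T [TY cubeT]] := ampC Y (shattered_sub (fiber_sub C e v) shY).
have [Tv|Tv] := eqVneq (e \in T) v; first by exists T; rewrite -Tv cube_fiber.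
(* The cube through T lies in the other fiber, so C shatters e |: Y. *)
apply: (has_cube_sub (carrier_sub C e v)); apply: (has_cube_carrier _ eY).
apply: ampC; apply: (shattered_setU1 eY) => w.
have [->//|wv] := eqVneq w v.
have -> : w = (e \in T) by case: w v wv Tv {shY} => [] []; case: (e \in T).
by apply: has_cube_shattered; exists T; rewrite cube_fiber.
Qed.

Definition agree_on (r : seq X) a c := all (fun i => (i \in c) == (i \in a)) r.

Lemma ample_agree C a r : ample C -> ample [set c in C | agree_on r a c].
Proof.
elim: r => [|i r IHr] ampC.
  by rewrite (_ : [set c in C | _] = C) //; apply/setP => c; rewrite inE andbT.
rewrite (_ : [set c in C | _] = fiber [set c in C | agree_on r a c] i (i \in a)).
  exact: ample_fiber (IHr ampC).
by apply/setP => c; rewrite !inE /= andbA andbAC.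
Qed.

Lemma ample_Bcube C a b : ample C -> ample (Bcube a b :&: C).
Proof.
rewrite (_ : Bcube a b :&: C = [set c in C | agree_on (enum (~: symd a b)) a c]).
  exact: ample_agree.
apply/setP => t; rewrite in_setI [in RHS]inE andbC; congr (_ && _).
apply/BcubeP/allP => [tab i|tab i abi]; first by rewrite mem_enum inE => /tab ->.
by apply/eqP/tab; rewrite mem_enum inE.
Qed.

Definition adj_in D : rel {set X} := fun a b => [&& a \in D, b \in D & adjG a b].

Lemma adj_inP D a b : reflect [/\ a \in D, b \in D & adjG a b] (adj_in D a b).
Proof. exact: and3P. Qed.

Lemma adj_in_sym D : symmetric (adj_in D).
Proof. by move=> a b; rewrite /adj_in adjG_sym andbCA andbA. Qed.

Lemma adj_in_toggle D a e : a \in D -> toggle a e \in D -> adj_in D a (toggle a e).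
Proof. by move=> aD taD; rewrite /adj_in aD taD; apply/adjGP; exists e. Qed.

Lemma connect_adj_in_sub D1 D2 a b :
  D1 \subset D2 -> connect (adj_in D1) a b -> connect (adj_in D2) a b.
Proof.
move=> /subsetP D12; apply: connect_sub => x y /adj_inP[xD yD xy].
by apply: connect1; rewrite /adj_in !D12.
Qed.

Lemma ample_edge C a b e v :
  ample C -> a \in C -> b \in C -> e \in symd a b -> exists s, s \in carrier C e v.
Proof.
move=> ampC aC bC eab; have e0 : e \notin set0 by rewrite inE.
have shC : shattered C (e |: set0).
  apply: (shattered_setU1 e0) => w; have [<-|aw] := eqVneq (e \in a) w.
    by apply: (shattered_set0 (c := a)); rewrite in_fiber aC eqxx.
  apply: (shattered_set0 (c := b)); rewrite in_fiber bC.
  by move: eab aw; rewrite in_symd; case: (e \in a); case: (e \in b); case: w.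
have [T [_ /cube_subP cubeT]] := has_cube_carrier v e0 (ampC _ shC).
by exists T; rewrite -[T]setU0; apply: cubeT.
Qed.

Lemma ample_flip C a b : ample C -> a \in C -> b \in C -> a != b ->
  exists2 e, e \in symd a b & toggle a e \in C.
Proof.
move=> ampC aC; have [n] := ubnP #|symd a b|; elim: n b => // n IHn b ltn bC ab.
have [e eab] : exists e, e \in symd a b by apply/set0Pn; rewrite symd_eq0.
have inD c : c \in Bcube a b -> c \in C -> c \in Bcube a b :&: C.
  by move=> cB cC; rewrite in_setI cB.
(* An e-edge of B(a,b) :&: C leaving a's side starts either at a or at some s
   strictly closer to a than b is. *)
have [s] := ample_edge (e \in a) (ample_Bcube ampC)
  (inD _ (mem_Bcube_l a b) aC) (inD _ (mem_Bcube_r a b) bC) eab.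
rewrite in_carrier !in_setI => /and3P[/andP[sab sC] /eqP se /andP[_ tsC]].
have [eq_as|neq_as] := eqVneq a s; first by exists e; last rewrite eq_as.
have sas_sab : symd a s \subset symd a b by rewrite -Bcube_symd.
have lt : #|symd a s| < #|symd a b|.
  apply: proper_card; apply/properP; split => //.
  by exists e; rewrite // in_symd se addbb.
have [h has ahC] := IHn s (leq_trans lt (ltnSE ltn)) sC neq_as.
by exists h; first exact: (subsetP sas_sab).
Qed.

Lemma ample_geodesic C a b :
  ample C -> a \in C -> b \in C -> connect (adj_in (Bcube a b :&: C)) a b.
Proof.
move=> ampC; have [n] := ubnP #|symd a b|; elim: n a => // n IHn a ltn aC bC.
have [->|ab] := eqVneq a b; first exact: connect0.
have [e eab aeC] := ample_flip ampC aC bC ab.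
apply: (@connect_trans _ _ (toggle a e)).
  by apply: connect1; apply: adj_in_toggle; rewrite inE ?aeC ?mem_Bcube_l ?toggle_Bcube.
apply: (connect_adj_in_sub _ (IHn _ _ aeC bC)).
  by rewrite setSI // Bcube_subset ?toggle_Bcube ?mem_Bcube_r.
rewrite card_symd_toggle // -ltnS prednK // card_gt0.
by apply/set0Pn; exists e.
Qed.

Lemma path_adj_in D c p :
  c \in D -> path (@adjG X) c p -> all (fun v => v \in D) p -> path (adj_in D) c p.
Proof.
elim: p c => //= d p IHp c cD /andP[cd cp] /andP[dD pD].
by rewrite /adj_in cD dD cd IHp.
Qed.

Lemma connect_cross D e x y :
  x \in D -> connect (adj_in D) x y -> (e \in y) != (e \in x) ->
  exists q, [/\ q \in D, toggle q e \in D, (e \in q) = (e \in x)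
              & connect (adj_in (fiber D e (e \in x))) x q].
Proof.
move=> xD xy eyx; set F := fiber D e (e \in x); set crossed := exists q, _.
pose P (z : {set X}) := crossed \/ (e \in z) = (e \in x) /\ connect (adj_in F) x z.
have [//|[eyx' _]] : P y.
  apply: (connect_invariant _ _ xy); first by right; split; last exact: connect0.
  move=> a b [cross _|[ea xa]]; first by left.
  case/adj_inP=> aD bD /adjGP[g bE]; subst b.
  have [ge|ge] := eqVneq g e; first by subst g; left; exists a.
  have eag : (e \in toggle a g) = (e \in x) by rewrite in_toggle_neq 1?eq_sym.
  right; split => //; apply: connect_trans xa (connect1 _).
  by apply: adj_in_toggle; rewrite in_fiber ?aD ?bD ?ea ?eag eqxx.
by rewrite eyx' eqxx in eyx.
Qed.

Lemma locally_convex_square C C' s e g : locally_convex_in C' C ->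
  s \in C -> e != g -> toggle s e \in C' -> toggle s g \in C' -> s \in C'.
Proof.
move=> lc sC eg seC' sgC'.
apply: (subsetP (lc _ _ seC' sgC' _)); first by rewrite symd_toggle2 // cards2 eg.
rewrite in_setI sC andbT Bcube_symd symdC symd_toggle symd_toggle2 //.
by rewrite sub1set !inE eqxx.
Qed.

Lemma locally_convex_fiber C C' e v :
  locally_convex_in C' C -> locally_convex_in (fiber C' e v) (fiber C e v).
Proof.
move=> lc a b; rewrite !in_fiber => /andP[aC' _] /andP[bC' _] ab2.
apply/subsetP => t; rewrite !in_setI !in_fiber => /and3P[tB tC tv].
by rewrite tv andbT; apply: (subsetP (lc _ _ aC' bC' ab2)); rewrite in_setI tB.
Qed.

Lemma card_fiber_lt C e v x : x \in C -> toggle x e \in C -> #|fiber C e v| < #|C|.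
Proof.
move=> xC txC; apply: proper_card; apply/properP; split; first exact: fiber_sub.
have [xv|xv] := eqVneq (e \in x) v.
  exists (toggle x e); rewrite // in_fiber in_toggle eqxx xv addbT.
  by case: (v); rewrite /= andbF.
by exists x; rewrite // in_fiber (negPf xv) andbF.
Qed.

Definition component_convex C' C : Prop :=
  forall c c', c \in C' -> connect (adj_in C') c c' -> Bcube c c' :&: C \subset C'.

Lemma flip_transfer C C' e v x q :
  ample C -> locally_convex_in C' C ->
  x \in carrier C e v -> q \in carrier C e v ->
  Bcube q x :&: fiber C e v \subset C' -> toggle q e \in C' -> toggle x e \in C'.
Proof.
move=> ampC lc xR qR qx_sub tqC'.
have := ample_geodesic (ample_carrier (e := e) (v := v) ampC) qR xR.
apply: (connect_invariant (P := fun s => toggle s e \in C')) => // s s' tsC'.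
case/adj_inP; rewrite !in_setI => /andP[_ sR] /andP[s'B s'R] /adjGP[g s'E]; subst s'.
move: sR s'R; rewrite !in_carrier => /and3P[_ /eqP sv _] /and3P[sgC /eqP sgv tsgC].
have eg : e != g.
  by apply/eqP => eg; move: sgv; rewrite -eg in_toggle eqxx sv; case: (v).
have sgC' : toggle s g \in C'.
  by apply: (subsetP qx_sub); rewrite in_setI s'B in_fiber sgC sgv eqxx.
by apply: (locally_convex_square lc tsgC eg); rewrite ?toggleK // toggleC toggleK.
Qed.

Lemma flip_along_component C C' e x u :
  ample C -> C' \subset C -> locally_convex_in C' C ->
  component_convex (fiber C' e (e \in x)) (fiber C e (e \in x)) ->
  x \in C' -> toggle x e \in C -> u \in C' -> toggle u e \in C' ->
  connect (adj_in C') x u -> toggle x e \in C'.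
Proof.
move=> ampC /subsetP sub lc fiber_cvx xC' txC uC' tuC' xu.
have [y xy eyx] : exists2 y, connect (adj_in C') x y & (e \in y) != (e \in x).
  have [eux|] := eqVneq (e \in u) (e \in x); last by exists u.
  exists (toggle u e); last by rewrite in_toggle eqxx eux; case: (e \in x).
  exact: connect_trans xu (connect1 (adj_in_toggle uC' tuC')).
have [q [qC' tqC' eqx xq]] := connect_cross xC' xy eyx.
have qx_sub : Bcube q x :&: fiber C e (e \in x) \subset C'.
  rewrite BcubeC; apply: subset_trans (fiber_sub C' e (e \in x)).
  by apply: fiber_cvx xq; rewrite in_fiber xC' eqxx.
apply: (flip_transfer ampC lc _ _ qx_sub tqC'); first by rewrite in_carrier sub // eqxx.
by rewrite in_carrier sub // eqx eqxx sub.
Qed.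

Theorem ample_component_convex C C' :
  ample C -> C' \subset C -> locally_convex_in C' C -> component_convex C' C.
Proof.
have [n] := ubnP #|C|; elim: n C C' => // n IHn C C' ltn ampC sub lc c c' cC' cc'.
have fiber_cvx e w : w \in C -> toggle w e \in C ->
    component_convex (fiber C' e (e \in w)) (fiber C e (e \in w)).
  move=> wC twC; apply: IHn; last exact: locally_convex_fiber.
  - exact: leq_trans (card_fiber_lt _ wC twC) (ltnSE ltn).
  - exact: ample_fiber.
  - exact: fiberS.
have crossing g : g \in symd c c' ->
    exists u, [/\ u \in C', toggle u g \in C' & connect (adj_in C') c u].
  move=> gcc'; have [|u [uC' tuC' _ cu]] := connect_cross cC' cc' (e := g).
    by move: gcc'; rewrite in_symd; case: (g \in c); case: (g \in c').
  by exists u; split=> //; apply: connect_adj_in_sub cu; apply: fiber_sub.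
have csym : connect_sym (adj_in C') := sym_connect_sym (adj_in_sym C').
apply/subsetP => t; rewrite in_setI => /andP[tB tC].
suff : (t \in C') && connect (adj_in C') c t by case/andP.
have := ample_geodesic ampC (subsetP sub c cC') tC.
apply: (connect_invariant (P := fun w => (w \in C') && connect (adj_in C') c w)).
  by rewrite cC' connect0.
move=> w w' /andP[wC' cw] /adj_inP[]; rewrite !in_setI.
move=> /andP[wB wC] /andP[twB twC] /adjGP[g w'E]; subst w'.
have gcc' : g \in symd c c'.
  by apply: (Bcube_edge (s := w)); apply: (subsetP (Bcube_subset (mem_Bcube_l c c') tB)).
have [u [uC' tuC' cu]] := crossing g gcc'.
have twC' : toggle w g \in C'.
  apply: (flip_along_component ampC sub lc (fiber_cvx g w wC twC) wC' twC uC' tuC').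
  by apply: connect_trans cu; rewrite csym.
by rewrite twC' (connect_trans cw (connect1 (adj_in_toggle wC' twC'))).
Qed.

End Ample.

Theorem lemma4p8 (X : finType) (C C' : {set {set X}}) :
  ample C -> C' \subset C -> graph_connected C' ->
  (convex_in C' C <-> locally_convex_in C' C).
Proof.
move=> ampC sub conn; split=> [cvx c c' cC' c'C' _|lc c c' cC' c'C']; first exact: cvx.
have [p [cp pC' <-]] := conn c c' cC' c'C'.
apply: (ample_component_convex ampC sub lc cC').
by apply/connectP; exists p => //; apply: path_adj_in.
Qed.
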